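(* If $V=\langle v_1,\dots,v_\ell\rangle$ is a sequence of moves that can be applied (successively) to the distribution $\mu$, then $V\mu\preceq\bar V\mu$, where $\bar V=\langle\bar v_1,\dots,\bar v_\ell\rangle$ is the sequence of extreme moves on the same intervals.
   Context: A distribution is a finite set $\{(x_1,m_1),\dots,(x_k,m_k)\}$, $m_i>0$; $\mu(A)=\sum_{x_i\in A}m_i$; $M_j[\mu]=\sum_im_ix_i^j$. A move $v=([a,b],\delta)$ has $\delta$ a signed distribution on $[a,b]$ with $M_0[\delta]=M_1[\delta]=0$; it applies to $\mu$ if $\mu+\delta$ is a distribution, and $v\mu=\mu+\delta$; $V\mu$ denotes the result of applying $v_1,\dots,v_\ell$ in order. The extreme move $\bar v$ on $[a,b]$ maps any distribution $\mu$ to the distribution $\mu'$ with $\mu'\{a<x<b\}=0$, $\mu'(\{x\})=\mu(\{x\})$ for $x\notin[a,b]$, $M_0[\mu']=M_0[\mu]$, $M_1[\mu']=M_1[\mu]$. $\mu'$ is a basic split of $\mu$ if obtained by replacing one point mass $(x_i,m_i)$ by finitely many point masses of total mass $m_i$ and center of mass $x_i$; $\mu\preceq\mu'$ if $\mu'$ is obtained from $\mu$ by zero or more basic splits. *)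

From HB Require Import structures.
From mathcomp Require Import all_boot all_order all_algebra.
Set Implicit Arguments. Unset Strict Implicit. Unset Printing Implicit Defensive.
Import Order.TTheory GRing.Theory Num.Theory.
Local Open Scope ring_scope.

(* A (signed) distribution is represented by a finite list of point masses
   (x, m); repeated points add up.  Its semantics is the finite measure
   mu(A) = sum of the m with x in A. *)
Notation pmlist R := (seq (R * R)).

Section Dist.
Variable R : realFieldType.

Definition meas (s : pmlist R) (A : pred R) : R := \sum_(p <- s | A p.1) p.2.
Definition mass (s : pmlist R) (x : R) : R := meas s (pred1 x).
Definition mom (j : nat) (s : pmlist R) : R := \sum_(p <- s) p.2 * p.1 ^+ j.

Definition is_dist (s : pmlist R) : Prop := forall x, 0 <= mass s x.

Definition move := (R * R * pmlist R)%type.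
Definition mv_a (v : move) : R := v.1.1.
Definition mv_b (v : move) : R := v.1.2.
Definition mv_delta (v : move) : pmlist R := v.2.

Definition is_move (v : move) : Prop :=
  all (fun p => (mv_a v <= p.1) && (p.1 <= mv_b v)) (mv_delta v)
  /\ mom 0 (mv_delta v) = 0 /\ mom 1 (mv_delta v) = 0.

Definition apply_move (v : move) (mu : pmlist R) : pmlist R := mu ++ mv_delta v.

Fixpoint applies_seq (V : seq move) (mu : pmlist R) : Prop :=
  match V with
  | [::] => True
  | v :: V' => is_dist (apply_move v mu) /\ applies_seq V' (apply_move v mu)
  end.

Fixpoint apply_seq (V : seq move) (mu : pmlist R) : pmlist R :=
  match V with
  | [::] => mu
  | v :: V' => apply_seq V' (apply_move v mu)
  end.

Definition extreme_move (a b : R) (mu mu' : pmlist R) : Prop :=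
  [/\ is_dist mu',
      meas mu' (fun x => (a < x) && (x < b)) = 0,
      (forall x, ~~ ((a <= x) && (x <= b)) -> mass mu' x = mass mu x),
      mom 0 mu' = mom 0 mu &
      mom 1 mu' = mom 1 mu].

Fixpoint extreme_seq (I : seq (R * R)) (mu nu : pmlist R) : Prop :=
  match I with
  | [::] => nu = mu
  | (a, b) :: I' => exists mu', extreme_move a b mu mu' /\ extreme_seq I' mu' nu
  end.

Definition basic_split (mu mu' : pmlist R) : Prop :=
  exists x : R, 0 < mass mu x /\
  exists sigma : pmlist R,
    [/\ all (fun p => 0 < p.2) sigma,
        mom 0 sigma = mass mu x,
        mom 1 sigma = mass mu x * x &
        forall y, mass mu' y = (if y == x then 0 else mass mu y) + mass sigma y].

Inductive preceq : pmlist R -> pmlist R -> Prop :=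
| preceq_refl mu mu' : (forall x, mass mu x = mass mu' x) -> preceq mu mu'
| preceq_step mu mu1 mu2 : basic_split mu mu1 -> preceq mu1 mu2 -> preceq mu mu2.

End Dist.

From HB Require Import structures.
From mathcomp Require Import all_boot all_order all_algebra.
From mathcomp Require Import ring lra.
Set Implicit Arguments. Unset Strict Implicit. Unset Printing Implicit Defensive.
Import Order.TTheory GRing.Theory Num.Theory.
Local Open Scope ring_scope.

(* All
   the quantities involved (masses, measures of sets, moments) are integrals
   integ s F = sum_i m_i F(x_i), and integrals only depend on the measure.

   The extreme move on [a, b] is realised by an explicit map, the collapse,
   which sends each atom strictly inside (a, b) to the two-point distribution
   on {a, b} with the same mass and barycenter; integrating against the
   collapse amounts to integrating F interpolated linearly on (a, b).  The
   result of an extreme move is unique (as a measure), so every property of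
   extreme moves is a property of the collapse.  The proof then rests on:
   - preceq_family: replacing parts of atoms by nonnegative lists of the same
     mass and barycenter is a refinement;
   - move_below_extreme: v mu precedes the collapse of mu (a move is invisible
     to interpolated integrands, and each inner atom splits onto {a, b});
   - preceq_collapse: collapsing is monotone for the refinement order, the
     delicate case being a basic split of an atom inside (a, b), handled by
     redistributing the collapsed pieces between a and b. *)

Section Refinement.
Variable R : realFieldType.
Implicit Types (s t mu nu : pmlist R) (F G : R -> R).

Definition integ s F : R := \sum_(p <- s) p.2 * F p.1.

Definition indic (y z : R) : R := if z == y then 1 else 0.

Lemma integ_nil F : integ [::] F = 0.
Proof. by rewrite /integ big_nil. Qed.

Lemma integ_cons p s F : integ (p :: s) F = p.2 * F p.1 + integ s F.
Proof. by rewrite /integ big_cons. Qed.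

Lemma integ_cat s t F : integ (s ++ t) F = integ s F + integ t F.
Proof. by rewrite /integ big_cat. Qed.

Lemma integ_eq s F G : (forall p, p \in s -> F p.1 = G p.1) -> integ s F = integ s G.
Proof. by move=> eFG; rewrite /integ !big_seq; apply: eq_bigr => p /eFG ->. Qed.

Lemma integZ s c F : integ s (fun z => c * F z) = c * integ s F.
Proof. by rewrite /integ mulr_sumr; apply: eq_bigr => p _; rewrite mulrCA. Qed.

Lemma integD s F G : integ s (fun z => F z + G z) = integ s F + integ s G.
Proof. by rewrite /integ -big_split; apply: eq_bigr => p _; rewrite mulrDr. Qed.

Lemma massE s y : mass s y = integ s (indic y).
Proof.
rewrite /mass /meas /integ big_mkcond; apply: eq_bigr => p _.
by rewrite /indic /=; case: eqP; rewrite ?mulr1 ?mulr0.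
Qed.

Lemma measE s (A : pred R) : meas s A = integ s (fun z => (A z)%:R).
Proof.
rewrite /meas /integ big_mkcond; apply: eq_bigr => p _.
by case: (A p.1); rewrite ?mulr1 ?mulr0.
Qed.

Lemma momE j s : mom j s = integ s (fun z => z ^+ j).
Proof. by []. Qed.

Lemma integ_affine s c d : integ s (fun z => c + d * z) = c * mom 0 s + d * mom 1 s.
Proof.
rewrite integD !momE -!integZ; congr (_ + _).
by apply: integ_eq => p _; rewrite expr0 mulr1.
Qed.

(* Grouping the atoms of s by position: integ s F = sum over the support of
   mass s z * F z.  This is what makes integ depend only on the measure. *)
Lemma integ_group s F (l : seq R) : uniq l -> {subset [seq p.1 | p <- s] <= l} ->
  integ s F = \sum_(z <- l) mass s z * F z.
Proof.
move=> ul; elim: s => [|p s IH] sub.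
  by rewrite integ_nil big1 // => z _; rewrite massE integ_nil mul0r.
rewrite integ_cons IH; last by move=> z zs; apply: sub; rewrite inE zs orbT.
have pl : p.1 \in l by apply: sub; rewrite inE eqxx.
under [RHS]eq_bigr => z _ do
  rewrite massE integ_cons -massE mulrDl.
rewrite big_split /=; congr (_ + _).
rewrite (bigD1_seq p.1) //= /indic eqxx mulr1 big1 ?addr0 // => z zp.
by rewrite eq_sym (negbTE zp) mulr0 mul0r.
Qed.

Lemma integ_support s F (l : seq R) : uniq l -> (forall z, z \notin l -> mass s z = 0) ->
  integ s F = \sum_(z <- l) mass s z * F z.
Proof.
move=> ul out0; set l' := [seq z <- undup [seq p.1 | p <- s] | z \notin l].
have ul' : uniq (l ++ l').
  rewrite cat_uniq ul filter_uniq ?undup_uniq // andbT /=.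
  by apply/hasPn => z; rewrite mem_filter => /andP[].
have sub : {subset [seq p.1 | p <- s] <= l ++ l'}.
  move=> z zs; rewrite mem_cat mem_filter mem_undup zs andbT.
  by case: (z \in l).
rewrite (integ_group F ul' sub) big_cat /= [X in _ + X]big1_seq ?addr0 // => z.
by rewrite mem_filter => /andP[_ /andP[/out0 -> _]]; rewrite mul0r.
Qed.

Lemma integ_filterC (P : pred (R * R)) s F :
  integ [seq p <- s | P p] F + integ [seq p <- s | ~~ P p] F = integ s F.
Proof.
elim: s => [|p s IH]; first by rewrite /= !integ_nil addr0.
by rewrite /=; case: (P p); rewrite /= !integ_cons -IH; ring.
Qed.

Definition meq s t := forall z, mass s z = mass t z.

Lemma integ_meq s t F : meq s t -> integ s F = integ t F.
Proof.
move=> est; set l := undup [seq p.1 | p <- s ++ t].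
have ul : uniq l by exact: undup_uniq.
rewrite (@integ_group s F l ul); last by move=> z zs; rewrite mem_undup map_cat mem_cat zs.
rewrite (@integ_group t F l ul); last by move=> z zt; rewrite mem_undup map_cat mem_cat zt orbT.
by apply: eq_bigr => z _; rewrite est.
Qed.

Lemma integ_ge0 s F : is_dist s -> (forall z, 0 <= F z) -> 0 <= integ s F.
Proof.
move=> ds F0; rewrite (@integ_group s F (undup [seq p.1 | p <- s])) ?undup_uniq //;
  last by move=> z; rewrite mem_undup.
by apply: sumr_ge0 => z _; apply: mulr_ge0.
Qed.

Lemma integ_atom_le s F x : is_dist s -> (forall z, 0 <= F z) -> mass s x * F x <= integ s F.
Proof.
move=> ds F0; set l := undup (x :: [seq p.1 | p <- s]).
rewrite (@integ_group s F l) ?undup_uniq //; last by move=> z zs; rewrite mem_undup inE zs orbT.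
rewrite (bigD1_seq x) ?undup_uniq ?mem_undup ?mem_head //= lerDl.
by apply: sumr_ge0 => z _; apply: mulr_ge0.
Qed.

Definition nonneg s := all (fun p => 0 <= p.2) s.

Lemma nonneg_cat s t : nonneg s -> nonneg t -> nonneg (s ++ t).
Proof. by rewrite /nonneg all_cat => -> ->. Qed.

Lemma integ_le s F G : nonneg s -> (forall p, p \in s -> F p.1 <= G p.1) ->
  integ s F <= integ s G.
Proof.
move=> /allP s0 leFG; rewrite /integ !big_seq; apply: ler_sum => p ps.
by apply: ler_wpM2l; [exact: s0 | exact: leFG].
Qed.

Lemma integ_ge0_nonneg s F : nonneg s -> (forall z, 0 <= F z) -> 0 <= integ s F.
Proof.
move=> /allP s0 F0; rewrite /integ big_seq; apply: sumr_ge0 => p ps.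
by apply: mulr_ge0; [exact: s0 | exact: F0].
Qed.

Lemma nonneg_dist s : nonneg s -> is_dist s.
Proof.
by move=> s0 z; rewrite massE; apply: integ_ge0_nonneg => // w; rewrite /indic; case: ifP.
Qed.

Lemma mom0_ge0 s : nonneg s -> 0 <= mom 0 s.
Proof. by move=> s0; rewrite momE; apply: integ_ge0_nonneg => // z; rewrite expr0 ler01. Qed.

Lemma mass_le_mom0 s y : nonneg s -> mass s y <= mom 0 s.
Proof.
move=> s0; rewrite massE momE; apply: integ_le => // p _.
by rewrite expr0 /indic; case: ifP; rewrite ?ler01 ?lexx.
Qed.

Lemma mass_cat s t z : mass (s ++ t) z = mass s z + mass t z.
Proof. by rewrite !massE integ_cat. Qed.

Lemma mom_cat j s t : mom j (s ++ t) = mom j s + mom j t.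
Proof. by rewrite !momE integ_cat. Qed.

Definition scale (c : R) s : pmlist R := [seq (p.1, c * p.2) | p <- s].

Lemma integ_scale c s F : integ (scale c s) F = c * integ s F.
Proof. by rewrite /integ big_map mulr_sumr; apply: eq_bigr => p _; rewrite mulrA. Qed.

Lemma mass_scale c s z : mass (scale c s) z = c * mass s z.
Proof. by rewrite !massE integ_scale. Qed.

Lemma mom_scale j c s : mom j (scale c s) = c * mom j s.
Proof. by rewrite !momE integ_scale. Qed.

Lemma nonneg_scale c s : 0 <= c -> nonneg s -> nonneg (scale c s).
Proof.
move=> c0 /allP s0; apply/allP => q /mapP [p ps ->] /=.
by apply: mulr_ge0 => //; exact: s0.
Qed.

Definition positive_part s := [seq p <- s | 0 < p.2].

Lemma integ_positive_part s F : nonneg s -> integ (positive_part s) F = integ s F.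
Proof.
elim: s => [|p s IH] //= /andP[p0 s0]; case: ifP => pp; rewrite !integ_cons IH //.
have -> : p.2 = 0 by apply/le_anti; rewrite p0 andbT leNgt pp.
by rewrite mul0r add0r.
Qed.

Lemma preceq_meql mu mu' nu : meq mu mu' -> preceq mu nu -> preceq mu' nu.
Proof.
move=> e h; case: h e => [m m' e2 | m m1 m2 [x [hx [sg [h1 h2 h3 h4]]]] p] e.
  by apply: preceq_refl => z; rewrite -e e2.
apply: (preceq_step _ p); exists x; rewrite -e; split => //.
by exists sg; split => // y; rewrite h4 e.
Qed.

Lemma preceq_meqr mu nu nu' : meq nu nu' -> preceq mu nu -> preceq mu nu'.
Proof.
move=> e h; elim: h nu' e => [m m' e2 | m m1 m2 bs _ IH] nu' e.
  by apply: preceq_refl => z; rewrite e2 e.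
exact: preceq_step bs (IH _ e).
Qed.

Lemma preceq_trans mu nu rho : preceq mu nu -> preceq nu rho -> preceq mu rho.
Proof.
elim=> [m m' e | m m1 m2 bs _ IH] h; last exact: preceq_step bs (IH h).
by apply: preceq_meql h => z; rewrite e.
Qed.

Lemma basic_split_dist mu mu1 : basic_split mu mu1 -> is_dist mu -> is_dist mu1.
Proof.
move=> [x [_ [sg [sg_pos _ _ h]]]] d y; rewrite h; apply: addr_ge0.
  by case: (y == x); last exact: d.
by apply: nonneg_dist; apply/allP => p /(allP sg_pos)/ltW.
Qed.

Lemma preceq_dist mu nu : preceq mu nu -> is_dist mu -> is_dist nu.
Proof.
elim=> [m m' e | m m1 m2 bs _ IH] d; first by move=> z; rewrite -e.
exact/IH/(basic_split_dist bs).
Qed.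

Definition centered s x := nonneg s /\ mom 1 s = mom 0 s * x.

Lemma mass_split_atom mu x w sg y :
  mass (mu ++ (x, - w) :: sg) y = mass mu y - w * indic x y + mass sg y.
Proof. by rewrite !massE integ_cat integ_cons /= /indic eq_sym; ring. Qed.

Lemma preceq_split_atom mu x sg : centered sg x ->
  mom 0 sg <= mass mu x -> preceq mu (mu ++ (x, - mom 0 sg) :: sg).
Proof.
move=> [sg0 bar] le_w; set w := mom 0 sg; set mu1 := mu ++ _.
have w0 : 0 <= w := mom0_ge0 sg0.
have mu1E y : mass mu1 y = mass mu y - w * indic x y + mass sg y := mass_split_atom _ _ _ _ _.
have [mx0|mx_pos] := eqVneq (mass mu x) 0.
  have w_eq0 : w = 0 by apply/le_anti; rewrite w0 -mx0 le_w.
  apply: preceq_refl => y; rewrite mu1E w_eq0 mul0r subr0.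
  suff -> : mass sg y = 0 by rewrite addr0.
  have := @mass_le_mom0 sg y sg0; rewrite -/w w_eq0 => le0.
  by apply/le_anti; rewrite le0 nonneg_dist.
have mx_gt0 : 0 < mass mu x by rewrite lt_def mx_pos (le_trans w0 le_w).
set sigma0 : pmlist R := (x, mass mu x - w) :: sg.
have sigma0_nn : nonneg sigma0 by rewrite /= subr_ge0 le_w sg0.
apply: (@preceq_step _ mu mu1 mu1); last exact: preceq_refl.
exists x; split => //; exists (positive_part sigma0); split.
- by apply/allP => p; rewrite mem_filter => /andP[].
- by rewrite momE integ_positive_part // integ_cons -momE /= expr0 -/w; ring.
- by rewrite momE integ_positive_part // integ_cons -momE /= expr1 bar -/w; ring.
- move=> y; rewrite [mass (positive_part _) _]massE integ_positive_part // integ_cons.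
  rewrite -massE mu1E /indic /=.
  by case: (eqVneq y x) => [->|ne] /=; ring.
Qed.

Lemma preceq_family (fam : seq (R * pmlist R)) mu mu' :
  (forall i, i \in fam -> centered i.2 i.1) ->
  (forall x, \sum_(i <- fam | i.1 == x) mom 0 i.2 <= mass mu x) ->
  (forall y, mass mu' y =
     mass mu y - \sum_(i <- fam | i.1 == y) mom 0 i.2 + \sum_(i <- fam) mass i.2 y) ->
  preceq mu mu'.
Proof.
elim: fam mu => [|[x sg] fam IH] mu hfam hbound hmu'.
  by apply: preceq_refl => y; rewrite hmu' !big_nil subr0 addr0.
have cent := hfam (x, sg) (mem_head _ _); have [sg0 _] := cent.
have rest0 y : 0 <= \sum_(i <- fam | i.1 == y) mom 0 i.2.
  rewrite big_seq_cond; apply: sumr_ge0 => i /andP[ifam _].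
  by apply: mom0_ge0; case: (hfam i); rewrite // inE ifam orbT.
have le_w : mom 0 sg <= mass mu x.
  by move: (hbound x) (rest0 x); rewrite big_cons /= eqxx; lra.
apply: (preceq_trans (preceq_split_atom cent le_w)); apply: IH.
- by move=> i ifam; apply: hfam; rewrite inE ifam orbT.
- move=> y; move: (hbound y) (nonneg_dist sg0 y).
  rewrite big_cons /= mass_split_atom /indic.
  by case: (eqVneq y x) => [->|ne]; rewrite ?eqxx 1?eq_sym ?(negbTE ne); lra.
- move=> y; rewrite hmu' mass_split_atom !big_cons /= /indic.
  by case: (eqVneq y x) => [->|ne]; rewrite ?eqxx 1?eq_sym ?(negbTE ne); ring.
Qed.

Definition interp (a b : R) F (z : R) : R :=
  (b - z) / (b - a) * F a + (z - a) / (b - a) * F b.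

Lemma interpE a b F z :
  interp a b F z = (b * F a - a * F b) / (b - a) + (F b - F a) / (b - a) * z.
Proof. by rewrite /interp; ring. Qed.

Lemma interp_pow a b j z : a < b -> (j <= 1)%N -> interp a b (fun y => y ^+ j) z = z ^+ j.
Proof.
move=> ab; have ba : b - a != 0 by rewrite subr_eq0 gt_eqF.
by case: j => [|[|//]] _; rewrite /interp ?expr0 ?expr1; field.
Qed.

Definition bary2 (a b m z : R) : pmlist R :=
  [:: (a, m * ((b - z) / (b - a))); (b, m * ((z - a) / (b - a)))].

Lemma integ_bary2 a b m z F : integ (bary2 a b m z) F = m * interp a b F z.
Proof. by rewrite !integ_cons integ_nil /interp /=; ring. Qed.

Lemma nonneg_bary2 a b m z : 0 <= m -> a < z -> z < b -> nonneg (bary2 a b m z).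
Proof.
move=> m0 az zb; have ab := lt_trans az zb.
by rewrite /= !mulr_ge0 // ?invr_ge0 subr_ge0 ltW.
Qed.

Definition collapse (a b : R) s : pmlist R :=
  flatten [seq if (a < p.1) && (p.1 < b) then bary2 a b p.2 p.1 else [:: p] | p <- s].

Definition collF (a b : R) F (y : R) : R :=
  if (a < y) && (y < b) then interp a b F y else F y.

Lemma integ_collapse a b s F : integ (collapse a b s) F = integ s (collF a b F).
Proof.
elim: s => [|p s IH]; first by rewrite !integ_nil.
rewrite /collapse /= integ_cat -/(collapse a b s) IH integ_cons.
by rewrite /collF; case: ifP => _; rewrite ?integ_bary2 // integ_cons integ_nil addr0.
Qed.

Lemma nonneg_collapse a b s : nonneg s -> nonneg (collapse a b s).
Proof.
elim: s => [|p s IH] //= /andP[p0 s0]; rewrite /collapse /= -/(collapse a b s).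
apply: nonneg_cat (IH s0); case: ifP => [/andP[ap pb]|_]; last by rewrite /= p0.
exact: nonneg_bary2.
Qed.

Lemma collapse_outside a b s p : p \in collapse a b s -> ~~ ((a < p.1) && (p.1 < b)).
Proof.
elim: s => [|q s IH] //; rewrite /collapse /= mem_cat => /orP[|/IH //].
case: ifP => [_|/negbT out]; last by rewrite inE => /eqP ->.
by rewrite !inE => /orP[] /eqP -> /=; rewrite ltxx // andbF.
Qed.

Lemma collF_pow a b j z : (j <= 1)%N -> collF a b (fun y => y ^+ j) z = z ^+ j.
Proof.
move=> j1; rewrite /collF; case: ifP => // /andP[az zb].
exact: interp_pow (lt_trans az zb) j1.
Qed.

Lemma mom_collapse a b j s : (j <= 1)%N -> mom j (collapse a b s) = mom j s.
Proof. by move=> j1; rewrite !momE integ_collapse; apply: integ_eq => p _; rewrite collF_pow. Qed.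

Lemma collapse_meq a b s t : meq s t -> meq (collapse a b s) (collapse a b t).
Proof. by move=> est z; rewrite !massE !integ_collapse (integ_meq _ est). Qed.

Lemma collF_indic_ge0 a b y z : 0 <= collF a b (indic y) z.
Proof.
rewrite /collF /interp /indic; case: ifP => [/andP[az zb]|_]; last by case: ifP.
have ab := lt_trans az zb.
have wa : 0 <= (b - z) / (b - a) by rewrite divr_ge0 // subr_ge0 ltW.
have wb : 0 <= (z - a) / (b - a) by rewrite divr_ge0 // subr_ge0 ltW.
by rewrite addr_ge0 // mulr_ge0 //; case: ifP.
Qed.

Lemma collapse_extreme a b s : is_dist s -> extreme_move a b s (collapse a b s).
Proof.
move=> ds; split.
- by move=> y; rewrite massE integ_collapse; apply: integ_ge0 => // z; apply: collF_indic_ge0.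
- rewrite measE integ_collapse -(integ_nil (fun=> 0)) /integ big_nil big1 // => p _.
  rewrite /collF /interp; case: ifP => [_|->] /=; last by rewrite mulr0.
  by rewrite !ltxx andbF /= !mulr0 addr0 mulr0.
- move=> x out; rewrite !massE integ_collapse; apply: integ_eq => p _.
  rewrite /collF /interp /indic; case: ifP => // /andP[ap pb].
  have ax : a != x by apply: contraNneq out => <-; rewrite lexx ltW // (lt_trans ap pb).
  have bx : b != x by apply: contraNneq out => <-; rewrite lexx ltW // (lt_trans ap pb).
  have px : p.1 != x by apply: contraNneq out => <-; rewrite !ltW.
  by rewrite (negbTE ax) (negbTE bx) (negbTE px) !mulr0 addr0.
- exact: mom_collapse.
- exact: mom_collapse.
Qed.

(* The result of an extreme move has no mass strictly inside (a, b) ... *)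
Lemma extreme_move_inside a b s m z : extreme_move a b s m -> a < z -> z < b -> mass m z = 0.
Proof.
move=> [dm inside0 _ _ _] az zb; apply/le_anti; rewrite dm andbT.
have := @integ_atom_le m (fun y => ((a < y) && (y < b))%:R) z dm.
by rewrite -measE inside0 az zb mulr1; apply=> y; rewrite ler0n.
Qed.

(* ... hence it is unique: a signed measure carried by {a, b} with vanishing
   mass and first moment is zero. *)
Lemma extreme_move_unique a b s m m' :
  extreme_move a b s m -> extreme_move a b s m' -> meq m m'.
Proof.
move=> hm hm'; have [_ _ out m0 m1] := hm; have [_ _ out' m0' m1'] := hm'.
set d := m ++ scale (-1) m'.
have dE z : mass d z = mass m z - mass m' z.
  by rewrite mass_cat !massE integ_scale mulN1r.
have d_mom j : (j <= 1)%N -> mom j d = 0.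
  rewrite mom_cat !momE integ_scale -!momE mulN1r.
  by case: j => [|[|//]] _; rewrite ?m0 ?m0' ?m1 ?m1' subrr.
have d_supp z : z != a -> z != b -> mass d z = 0.
  move=> za zb; rewrite dE; case: (boolP ((a <= z) && (z <= b))) => [/andP[az zb']|zout].
    have az' : a < z by rewrite lt_neqAle eq_sym za az.
    have zb'' : z < b by rewrite lt_neqAle zb zb'.
    by rewrite (extreme_move_inside hm) ?(extreme_move_inside hm') ?subrr.
  by rewrite out // out' // subrr.
suff d0 z : mass d z = 0 by move=> z; apply/eqP; rewrite -subr_eq0 -dE d0.
have [eab|nab] := eqVneq a b.
  have out_a y : y \notin [:: a] -> mass d y = 0.
    by rewrite inE => ya; apply: d_supp; rewrite -?eab.
  have := d_mom 0%N isT; rewrite momE (integ_support _ _ out_a) // big_seq1 expr0 mulr1.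
  by move=> da; case: (eqVneq z a) => [->|za]; [|apply: out_a; rewrite inE].
have out_ab y : y \notin [:: a; b] -> mass d y = 0.
  by rewrite !inE negb_or => /andP[ya yb]; apply: d_supp.
have uab : uniq [:: a; b] by rewrite /= inE nab.
have := d_mom 0%N isT; have := d_mom 1%N isT.
rewrite !momE !(integ_support _ uab out_ab) !big_cons !big_nil /= !expr0 !expr1 => e1 e0.
have da : mass d a = - mass d b by apply/eqP; rewrite -addr_eq0 -e0 !mulr1 addr0.
have db : mass d b = 0.
  have : mass d b * (b - a) = 0 by rewrite -e1 da; ring.
  by move/eqP; rewrite mulf_eq0 subr_eq0 [b == a]eq_sym (negbTE nab) orbF => /eqP.
move: da; rewrite db oppr0 => da.
by case: (eqVneq z a) => [->|za] //; case: (eqVneq z b) => [->|zb] //; apply: d_supp.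
Qed.

(* A move on [a, b] is invisible to integrals of interpolated integrands:
   delta lives on [a, b], where collF a b F is affine, and has vanishing
   mass and first moment. *)
Lemma integ_move_collF (v : move R) F :
  is_move v -> integ (mv_delta v) (collF (mv_a v) (mv_b v) F) = 0.
Proof.
case: v => [[a b] dl]; rewrite /is_move /mv_a /mv_b /mv_delta /= => -[inab [dl0 dl1]].
have [ab|ba] := ltP a b.
  have ba0 : b - a != 0 by rewrite subr_eq0 gt_eqF.
  rewrite (@integ_eq _ _ (fun z => (b * F a - a * F b) / (b - a) + (F b - F a) / (b - a) * z)).
    by rewrite integ_affine dl0 dl1 !mulr0 addr0.
  move=> p /(allP inab) /andP[ap pb]; rewrite /collF -interpE.
  case: ifP => // /negbT; rewrite negb_and -!leNgt => /orP[pa|bp].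
    by rewrite (@le_anti _ _ p.1 a) ?pa ?ap // /interp; field.
  by rewrite (@le_anti _ _ p.1 b) ?pb ?bp // /interp; field.
have at_a p : p \in dl -> p.1 = a.
  by move=> /(allP inab) /andP[ap pb]; apply/le_anti; rewrite ap (le_trans pb ba).
rewrite (@integ_eq _ _ (fun z => F a * z ^+ 0)) ?integZ -?momE ?dl0 ?mulr0 // => p pdl.
by rewrite /collF at_a // ltxx expr0 mulr1.
Qed.

Lemma collapse_apply_move (v : move R) mu : is_move v ->
  meq (collapse (mv_a v) (mv_b v) (apply_move v mu)) (collapse (mv_a v) (mv_b v) mu).
Proof.
by move=> hv z; rewrite !massE !integ_collapse /apply_move integ_cat integ_move_collF // addr0.
Qed.

Lemma sum_seq_pred1 (l : seq R) (f : R -> R) x : uniq l ->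
  \sum_(z <- l | z == x) f z = if x \in l then f x else 0.
Proof.
move=> ul; case: ifP => xl; last first.
  by rewrite big_seq_cond big1 // => z /andP[zl /eqP zx]; rewrite -zx zl in xl.
rewrite big_mkcond (bigD1_seq x) //= eqxx big1 ?addr0 // => z zx.
by rewrite (negbTE zx).
Qed.

(* Every distribution is refined by its collapse: each inner atom splits
   into the two-point list of the same mass and barycenter. *)
Lemma preceq_collapse_self a b t : is_dist t -> preceq t (collapse a b t).
Proof.
move=> dt; set l := undup [seq p.1 | p <- t].
have ul : uniq l := undup_uniq _.
have sub : {subset [seq p.1 | p <- t] <= l} by move=> z; rewrite mem_undup.
pose inner z := (a < z) && (z < b).
have bary2_mom m z j : inner z -> (j <= 1)%N -> mom j (bary2 a b m z) = m * z ^+ j.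
  by move=> /andP[az zb] j1; rewrite momE integ_bary2 interp_pow // (lt_trans az zb).
apply: (@preceq_family [seq (z, bary2 a b (mass t z) z) | z <- l & inner z]).
- move=> i /mapP [z]; rewrite mem_filter => /andP[zin _] -> /=.
  rewrite /centered !bary2_mom // expr0 expr1 mulr1; split=> //.
  by case/andP: zin => az zb; apply: nonneg_bary2.
- move=> x; rewrite big_map big_filter_cond /= (eq_bigr (mass t)); last first.
    by move=> z /andP[zin _]; rewrite bary2_mom // mulr1.
  rewrite -big_filter_cond sum_seq_pred1 ?filter_uniq //.
  by case: ifP => _; [exact: lexx | exact: dt].
- move=> y; rewrite !massE integ_collapse !(integ_group _ ul sub) !big_map /=.
  rewrite big_filter_cond big_filter [X in _ - X + _]big_mkcond [X in _ + X]big_mkcond.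
  rewrite -sumrB -big_split /=; apply: eq_bigr => z _.
  rewrite /collF -/(inner z); case: ifP => zin /=; last by rewrite subr0 addr0.
  rewrite bary2_mom // [mass (bary2 _ _ _ _) _]massE integ_bary2 expr0 mulr1 /indic.
  by case: (z == y); ring.
Qed.

Lemma move_below_extreme (v : move R) mu : is_move v -> is_dist (apply_move v mu) ->
  preceq (apply_move v mu) (collapse (mv_a v) (mv_b v) mu).
Proof.
move=> hv dv; apply: (preceq_meqr (collapse_apply_move mu hv)).
exact: preceq_collapse_self.
Qed.

Lemma mom1_le_left s a : nonneg s -> (forall p, p \in s -> p.1 <= a) -> mom 1 s <= a * mom 0 s.
Proof.
move=> s0 left; rewrite !momE -integZ; apply: integ_le => // p ps.
by rewrite expr1 expr0 mulr1 left.
Qed.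

Lemma mom1_ge_right s b : nonneg s -> (forall p, p \in s -> b <= p.1) -> b * mom 0 s <= mom 1 s.
Proof.
move=> s0 right; rewrite !momE -integZ; apply: integ_le => // p ps.
by rewrite expr1 expr0 mulr1 right.
Qed.

(* Positivity of the determinant of the redistribution problem below: P, ML
   (resp. Q, MR) are the mass and first moment of a nonnegative list on
   (-oo, a] (resp. [b, +oo)), jointly matching p.delta_a + q.delta_b. *)
Lemma side_determinant_pos (P Q ML MR a b p q : R) :
  a < b -> 0 < p -> 0 < q -> 0 <= P -> 0 <= Q -> ML <= a * P -> b * Q <= MR ->
  P + Q = p + q -> ML + MR = p * a + q * b -> 0 < P * MR - Q * ML.
Proof.
move=> ab p0 q0 P0 Q0 hL hR hm0 hm1.
have -> : P * MR - Q * ML = (b - a) * P * Q + P * (MR - b * Q) + Q * (a * P - ML) by ring.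
have u0 : 0 <= a * P - ML by lra.
have w0 : 0 <= MR - b * Q by lra.
have [Ppos|] := ltP 0 P; last move=> Ple.
  have [Qpos|Qle] := ltP 0 Q.
    have : 0 < (b - a) * P * Q by rewrite !mulr_gt0 // subr_gt0.
    have : 0 <= P * (MR - b * Q) by exact: mulr_ge0.
    have : 0 <= Q * (a * P - ML) by exact: mulr_ge0.
    lra.
  have eQ : Q = 0 by lra.
  have eP : P = p + q by lra.
  have : 0 < q * (b - a) by rewrite mulr_gt0 // subr_gt0.
  move: hL hR; rewrite eQ eP => hL hR hq.
  rewrite !mulr0 mul0r !addr0 subr0 add0r; apply: mulr_gt0; lra.
have eP : P = 0 by lra.
have eQ : Q = p + q by lra.
have : 0 < p * (b - a) by rewrite mulr_gt0 // subr_gt0.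
move: hL hR; rewrite eQ eP => hL hR hp.
rewrite !mulr0 !mul0r !add0r; apply: mulr_gt0; lra.
Qed.

Lemma two_sides_weights (P Q ML MR a b p q : R) :
  a < b -> 0 < p -> 0 < q -> 0 <= P -> 0 <= Q -> ML <= a * P -> b * Q <= MR ->
  P + Q = p + q -> ML + MR = p * a + q * b ->
  exists cL cR, [/\ 0 <= cL <= 1, 0 <= cR <= 1, cL * P + cR * Q = p & cL * ML + cR * MR = p * a].
Proof.
move=> ab p0 q0 P0 Q0 hL hR hm0 hm1.
have Kpos := side_determinant_pos ab p0 q0 P0 Q0 hL hR hm0 hm1.
set K := P * MR - Q * ML in Kpos; have K0 : K != 0 by rewrite gt_eqF.
have share (u : R) : 0 <= u -> 0 <= K - u -> 0 <= u / K <= 1.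
  by move=> u0 uK; rewrite divr_ge0 ?(ltW Kpos) //= ler_pdivrMr // mul1r -subr_ge0.
have QbA : 0 <= Q * (b - a) by rewrite mulr_ge0 // subr_ge0 ltW.
have PbA : 0 <= P * (b - a) by rewrite mulr_ge0 // subr_ge0 ltW.
have eq_q : q = P + Q - p by lra.
have eML : ML = p * a + q * b - MR by lra.
exists (p * (MR - Q * a) / K), (p * (P * a - ML) / K); split.
- apply: share; first by apply: mulr_ge0; lra.
  have -> : K - p * (MR - Q * a) = q * (MR - Q * b) by rewrite /K eML eq_q; ring.
  by apply: mulr_ge0; lra.
- apply: share; first by apply: mulr_ge0; lra.
  have -> : K - p * (P * a - ML) = q * (P * b - ML) by rewrite /K eML eq_q; ring.
  by apply: mulr_ge0; lra.
- by rewrite /K; field.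
- by rewrite /K; field.
Qed.

(* Redistribution: nonnegative lists TL on (-oo, a] and TR on [b, +oo) whose
   joint mass and first moment are those of p.delta_a + q.delta_b can be
   regrouped, by splitting each of them proportionally, into a list of mass
   p centered at a and a list of mass q centered at b. *)
Lemma redistribute_two_sides TL TR a b p q :
  a < b -> 0 < p -> 0 < q -> nonneg TL -> nonneg TR ->
  (forall r, r \in TL -> r.1 <= a) -> (forall r, r \in TR -> b <= r.1) ->
  mom 0 TL + mom 0 TR = p + q -> mom 1 TL + mom 1 TR = p * a + q * b ->
  exists sa sb, [/\ centered sa a, centered sb b, mom 0 sa = p, mom 0 sb = q &
    forall y, mass sa y + mass sb y = mass TL y + mass TR y].
Proof.
move=> ab p0 q0 TL0 TR0 TLa TRb hm0 hm1.
have [cL [cR [/andP[cL0 cL1] /andP[cR0 cR1] hp hpa]]] := two_sides_weights ab p0 q0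
  (mom0_ge0 TL0) (mom0_ge0 TR0) (mom1_le_left TL0 TLa) (mom1_ge_right TR0 TRb) hm0 hm1.
exists (scale cL TL ++ scale cR TR), (scale (1 - cL) TL ++ scale (1 - cR) TR).
have sb0 : (1 - cL) * mom 0 TL + (1 - cR) * mom 0 TR = q by lra.
have sb1 : (1 - cL) * mom 1 TL + (1 - cR) * mom 1 TR = q * b by lra.
rewrite /centered !mom_cat !mom_scale sb0 sb1 hp hpa; split=> //.
- by split; first by apply: nonneg_cat; apply: nonneg_scale.
- by split; first by apply: nonneg_cat; apply: nonneg_scale; rewrite ?subr_ge0.
- by move=> y; rewrite !mass_cat !mass_scale; ring.
Qed.

Lemma integ_basic_split rho rho1 x sg F :
  (forall y, mass rho1 y = (if y == x then 0 else mass rho y) + mass sg y) ->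
  integ rho1 F = integ rho F - mass rho x * F x + integ sg F.
Proof.
move=> hrho1; have e : meq rho1 (rho ++ (x, - mass rho x) :: sg).
  move=> y; rewrite hrho1 mass_split_atom /indic.
  by case: (eqVneq y x) => [->|ne]; rewrite ?eqxx ?(negbTE ne); ring.
by rewrite (integ_meq _ e) integ_cat integ_cons /=; ring.
Qed.

(* Outside (a, b) the atom at x
   is untouched by the collapse and is split into the collapse T of the
   pieces; inside, the images of the atom at a and b are split into two
   regroupings of T. *)
Lemma preceq_collapse_basic_split a b rho rho1 : is_dist rho -> basic_split rho rho1 ->
  preceq (collapse a b rho) (collapse a b rho1).
Proof.
move=> drho [x [mx_pos [sg [sg_pos sg0 sg1 hrho1]]]].
set m := mass rho x in mx_pos sg0 sg1.
set T := collapse a b sg.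
have T_nn : nonneg T by apply/nonneg_collapse/allP => p /(allP sg_pos)/ltW.
have T0 : mom 0 T = m by rewrite mom_collapse.
have T1 : mom 1 T = m * x by rewrite mom_collapse.
have rho1E y : mass (collapse a b rho1) y =
    mass (collapse a b rho) y - m * collF a b (indic y) x + mass T y.
  by rewrite !massE !integ_collapse (integ_basic_split _ hrho1).
have avail y : m * collF a b (indic y) x <= mass (collapse a b rho) y.
  rewrite massE integ_collapse; apply: integ_atom_le => // z.
  exact: collF_indic_ge0.
have dcol := collapse_extreme a b drho; have [dist_col _ _ _ _] := dcol.
case: (boolP ((a < x) && (x < b))) => [/andP[ax xb] | out]; last first.
  have collx y : collF a b (indic y) x = indic y x by rewrite /collF (negbTE out).
  apply: (@preceq_family [:: (x, T)]).
  - by move=> i; rewrite inE => /eqP -> /=; split; rewrite // T1 T0.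
  - move=> y; rewrite big_cons big_nil /=; case: eqP => [<-|_]; last exact: dist_col.
    by move: (avail x); rewrite collx /indic eqxx mulr1 addr0 T0.
  - move=> y; rewrite rho1E collx !big_cons !big_nil /= T0 /indic eq_sym.
    by case: (y == x); ring.
have ab := lt_trans ax xb.
pose p := m * ((b - x) / (b - a)); pose q := m * ((x - a) / (b - a)).
have p0 : 0 < p by rewrite mulr_gt0 // divr_gt0 // subr_gt0.
have q0 : 0 < q by rewrite mulr_gt0 // divr_gt0 // subr_gt0.
have hsum y : p * indic y a + q * indic y b = m * collF a b (indic y) x.
  by rewrite /collF ax xb /= /interp /p /q; ring.
pose TL := [seq r <- T | r.1 <= a]; pose TR := [seq r <- T | ~~ (r.1 <= a)].
have TLa r : r \in TL -> r.1 <= a by rewrite mem_filter => /andP[].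
have TRb r : r \in TR -> b <= r.1.
  rewrite mem_filter -ltNge => /andP[ar /collapse_outside].
  by rewrite ar /= -leNgt.
have nn_filter (P : pred (R * R)) : nonneg [seq r <- T | P r].
  by apply/allP => r; rewrite mem_filter => /andP[_ /(allP T_nn)].
have hm j : mom j TL + mom j TR = mom j T by rewrite !momE integ_filterC.
have ba0 : b - a != 0 by rewrite subr_eq0 gt_eqF.
have hm0 : mom 0 TL + mom 0 TR = p + q by rewrite hm T0 /p /q; field.
have hm1 : mom 1 TL + mom 1 TR = p * a + q * b by rewrite hm T1 /p /q; field.
have [sa [sb [ca cb sa0 sb0 sasb]]] :=
  redistribute_two_sides ab p0 q0 (nn_filter _) (nn_filter _) TLa TRb hm0 hm1.
apply: (@preceq_family [:: (a, sa); (b, sb)]).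
- by move=> i; rewrite !inE => /orP[] /eqP ->.
- move=> y; apply: le_trans (avail y); rewrite -hsum !big_cons big_nil /= sa0 sb0 /indic.
  by case: (a == y); case: (b == y); lra.
- move=> y; rewrite rho1E -hsum !big_cons !big_nil /= sa0 sb0 !addr0 sasb.
  rewrite !massE integ_filterC /indic.
  by case: (a == y); case: (b == y); ring.
Qed.

Lemma preceq_collapse a b rho rho' :
  is_dist rho -> preceq rho rho' -> preceq (collapse a b rho) (collapse a b rho').
Proof.
move=> drho h; elim: h drho => [m m' e | m m1 m2 bs _ IH] dm.
  exact/preceq_refl/collapse_meq.
exact: preceq_trans (preceq_collapse_basic_split a b dm bs) (IH (basic_split_dist bs dm)).
Qed.

Lemma extreme_seq_mono (I : seq (R * R)) rho rho' nu nu' : is_dist rho -> preceq rho rho' ->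
  extreme_seq I rho nu -> extreme_seq I rho' nu' -> preceq nu nu'.
Proof.
elim: I rho rho' => [|[a b] I IH] rho rho' drho h /=; first by move=> -> ->.
move=> [m [hm sm]] [m' [hm' sm']].
have drho' := preceq_dist h drho.
apply: (IH m m') => //; first by case: hm.
apply: (preceq_meql (extreme_move_unique (collapse_extreme a b drho) hm)).
apply: (preceq_meqr (extreme_move_unique (collapse_extreme a b drho') hm')).
exact: preceq_collapse.
Qed.

Lemma extreme_seq_exists (I : seq (R * R)) mu : is_dist mu -> exists nu, extreme_seq I mu nu.
Proof.
elim: I mu => [|[a b] I IH] mu dmu; first by exists mu.
have [dcol _ _ _ _] := collapse_extreme a b dmu.
have [nu h] := IH _ dcol.
by exists nu, (collapse a b mu); split=> //; apply: collapse_extreme.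
Qed.

(* Induction on V = v :: V': V mu = V'(v mu) precedes Vbar'(v mu), which
   precedes Vbar'(vbar mu) by monotonicity, since v mu precedes vbar mu. *)
Lemma apply_seq_below_extreme (V : seq (move R)) mu :
  is_dist mu -> (forall v, v \in V -> is_move v) -> applies_seq V mu ->
  forall nu, extreme_seq [seq (mv_a v, mv_b v) | v <- V] mu nu ->
  preceq (apply_seq V mu) nu.
Proof.
elim: V mu => [|v V IH] mu dmu hV happ nu /=; first by move=> ->; apply: preceq_refl.
move=> [mu1 [hmu1 hnu]]; move: happ => /= [dv happ].
have hv : is_move v by apply: hV; exact: mem_head.
have hV' w : w \in V -> is_move w by move=> wV; apply: hV; rewrite inE wV orbT.
have [nu0 hnu0] := extreme_seq_exists [seq (mv_a w, mv_b w) | w <- V] dv.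
apply: (preceq_trans (IH _ dv hV' happ nu0 hnu0)).
apply: (extreme_seq_mono dv _ hnu0 hnu).
apply: (preceq_meqr _ (move_below_extreme hv dv)).
exact: extreme_move_unique (collapse_extreme _ _ dmu) hmu1.
Qed.

End Refinement.

Theorem mainTheorem11 (R : realFieldType) (V : seq (move R)) (mu : seq (R * R)) :
  is_dist mu ->
  (forall v, v \in V -> is_move v) ->
  applies_seq V mu ->
  (exists nu, extreme_seq [seq (mv_a v, mv_b v) | v <- V] mu nu) /\
  (forall nu, extreme_seq [seq (mv_a v, mv_b v) | v <- V] mu nu ->
     preceq (apply_seq V mu) nu).
Proof.
move=> dmu hV happ; split; first exact: extreme_seq_exists.
exact: apply_seq_below_extreme.
Qed.
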